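(* Let $G$ be a connected graph and $K\subseteq V(G)$ a nonempty set of vertices inducing a clique in $G$. Let $G_K$ be obtained from $G$ by adding a new vertex $x$ with $N_{G_K}(x)=K$. For each search tree $T$ on $G$ let $P^x(T)=\{T(i,x,v_{\lambda(T)}) \mid i\in\{0,\ldots,\lambda(T)+1\}\}$. Then $\{P^x(T)\mid T\in V(\mathcal{R}(G))\}$ is a partition of $V(\mathcal{R}(G_K))$.
   Context: For a connected graph $G$, a search tree on $G$ is a rooted tree with vertex set $V(G)$ defined recursively: its root is some vertex $r\in V(G)$, and the children of $r$ are the roots of search trees on the connected components of $G-r$. The rotation graph $\mathcal{R}(G)$ has the search trees on $G$ as vertices (adjacency given by rotations; only its vertex set matters here). For a rooted tree $T$ with root $r_T$ and $w\in V(T)$, $d_{T,w}$ is the distance from $r_T$ to $w$ in $T$. For a search tree $T$ on $G$, all vertices of the clique $K$ lie on a common root-to-leaf path; $\lambda(T)=\max\{d_{T,u}\mid u\in K\}$ and $v_{\lambda(T)}$ is the unique vertex of $K$ with $d_{T,v_{\lambda(T)}}=\lambda(T)$. Insertion: for a rooted tree $T$, a vertex $v\in V(T)$ with $d=d_{T,v}$, root-to-$v$ path $r_T=a_0,a_1,\ldots,a_d=v$, and a new vertex $x\notin V(T)$, the rooted tree $T(i,x,v)$ on $V(T)\cup\{x\}$ is: for $i=0$, $x$ is the new root with $T$ as its only subtree; for $1\le i\le d$, the edge $a_{i-1}a_i$ is subdivided by $x$ (root unchanged); for $i=d+1$, $x$ is added as a new leaf child of $v$. *)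

From mathcomp Require Import all_boot.
Set Implicit Arguments. Unset Strict Implicit. Unset Printing Implicit Defensive.

Section SearchTrees.
Variable V : finType.

(* A graph is an edge relation e : rel V (assumed symmetric, irreflexive).
   A rooted tree on V is encoded by its parent function p : V -> option V
   (p v = None iff v is the root). *)

Definition induced (e : rel V) (A : {set V}) : rel V :=
  [rel u v | [&& e u v, u \in A & v \in A]].

Definition comp (e : rel V) (A : {set V}) (u : V) : {set V} :=
  [set v in A | connect (induced e A) u v].

Inductive search_tree (e : rel V) : {set V} -> V -> (V -> option V) -> Prop :=
| ST_node (S : {set V}) (r : V) (p : V -> option V) :
    r \in S -> p r = None ->
    (forall u, u \in S :\ r ->
       exists rc (q : V -> option V),
         search_tree e (comp e (S :\ r) u) rc q /\
         (forall v, v \in comp e (S :\ r) u ->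
            p v = (if v == rc then Some r else q v))) ->
    search_tree e S r p.

(* search trees on G (= vertices of the rotation graph R(G)) *)
Definition is_search_tree (e : rel V) (p : {ffun V -> option V}) : Prop :=
  exists r, search_tree e [set: V] r p.

Definition iter_par (p : {ffun V -> option V}) (k : nat) (w : V) : option V :=
  iter k (obind p) (Some w).

(* d_{T,w}: distance from the root, i.e. the largest k such that the k-th
   ancestor of w exists *)
Definition depth (p : {ffun V -> option V}) (w : V) : nat :=
  \max_(k < #|V|.+1 | iter_par p k w != None) (k : nat).

Definition lam (K : {set V}) (p : {ffun V -> option V}) : nat :=
  \max_(u in K) depth p u.

(* Insertion T(i,x,v) of the new vertex x := None into the tree p, giving a
   rooted tree on option V. With d = d_{T,v} and a_j = the (d-j)-th ancestor
   of v (the vertex at depth j on the root-to-v path):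
   i = 0: x is the new root, old root becomes child of x;
   1 <= i <= d: x subdivides the edge a_{i-1} a_i;
   i = d+1: x is a new leaf child of v. *)
Definition insert (p : {ffun V -> option V}) (i : nat) (v : V)
  : {ffun option V -> option (option V)} :=
  let d := depth p v in
  [ffun y => match y with
    | None => if i is i'.+1 then omap Some (iter_par p (d - i') v) else None
    | Some w => if (i <= d) && (Some w == iter_par p (d - i) v)
                then Some None else omap Some (p w)
    end].

Definition addvx (e : rel V) (K : {set V}) : rel (option V) :=
  fun a b => match a, b with
  | Some u, Some v => e u v
  | Some u, None => u \in K
  | None, Some v => v \in K
  | None, None => false
  end.

(* membership of T' in P^x(T): T' = T(i,x,v_lambda) for some i in 0..lambda+1;
   v_lambda is the (unique) vertex of K at depth lambda(T). *)
Definition Px (K : {set V}) (p : {ffun V -> option V})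
  (q : {ffun option V -> option (option V)}) : Prop :=
  exists v i, [/\ v \in K, depth p v = lam K p, i <= (lam K p).+1
              & q = insert p i v].

End SearchTrees.

(* Write x for the new vertex, encoded as [None]. As K together with x is a clique
   of G_K, x and K lie on one root-to-leaf path of every search tree on G_K.
   Following the recursive definition of search trees, induction on the vertex set
   shows that contracting x (re-attaching its children to its parent) turns a search
   tree on G_K into a search tree T on G, in which x either had a single child, an
   ancestor of the deepest vertex v of K, or was a leaf below v: these are the trees
   T(i,x,v) with i <= lambda(T) and with i = lambda(T)+1. Conversely each such
   insertion is a search tree on G_K, since below every root x joins the one
   component that contains the rest of K. Contraction undoes insertion, so distinct
   blocks P^x(T) are disjoint, and by the contraction result they cover V(R(G_K)). *)

From mathcomp Require Import all_boot.
Set Implicit Arguments. Unset Strict Implicit. Unset Printing Implicit Defensive.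

Section Ancestors.
Variables (T : finType) (p : T -> option T).

Definition kth_anc k w := iter k (obind p) (Some w).

Definition anc a w := exists k, kth_anc k w = Some a.

Lemma iter_obind_None k : iter k (obind p) None = None.
Proof. by elim: k => //= k ->. Qed.

Lemma kth_ancD j k w : kth_anc (j + k) w = obind (kth_anc j) (kth_anc k w).
Proof.
rewrite /kth_anc iterD; case: (iter k (obind p) (Some w)) => //=.
exact: iter_obind_None.
Qed.

Lemma kth_ancS k w : kth_anc k.+1 w = obind p (kth_anc k w).
Proof. by []. Qed.

Lemma kth_anc_past_root r w j k :
  p r = None -> kth_anc j w = Some r -> j < k -> kth_anc k w = None.
Proof.
by move=> pr Hj jk; rewrite -(subnK jk) kth_ancD kth_ancS Hj /= pr.
Qed.

Lemma kth_anc_root_uniq r w j k :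
  p r = None -> kth_anc j w = Some r -> kth_anc k w = Some r -> j = k.
Proof.
move=> pr Hj Hk; case: (ltngtP j k) => // [jk|kj].
  by rewrite (kth_anc_past_root pr Hj jk) in Hk.
by rewrite (kth_anc_past_root pr Hk kj) in Hj.
Qed.

Lemma anc_refl a : anc a a.
Proof. by exists 0. Qed.

Lemma anc_trans a b c : anc a b -> anc b c -> anc a c.
Proof. by move=> [j Hj] [k Hk]; exists (j + k); rewrite kth_ancD Hk. Qed.

Lemma anc_root a r : p r = None -> anc a r -> a = r.
Proof.
move=> pr [[|j] Hj]; first by case: Hj.
by rewrite (kth_anc_past_root (j := 0) pr erefl (ltn0Sn j)) in Hj.
Qed.

End Ancestors.

Lemma eq_kth_anc (T : finType) (p1 p2 : T -> option T) k w :
  p1 =1 p2 -> kth_anc p1 k w = kth_anc p2 k w.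
Proof. by move=> E; apply: eq_iter => -[x|] //=; rewrite E. Qed.

Lemma eq_anc (T : finType) (p1 p2 : T -> option T) a w :
  p1 =1 p2 -> anc p1 a w -> anc p2 a w.
Proof. by move=> E [k Hk]; exists k; rewrite -(eq_kth_anc _ _ E). Qed.

Lemma connect_ind (T : finType) (g : rel T) (P : T -> Prop) x :
  P x -> (forall y z, P y -> g y z -> P z) -> forall y, connect g x y -> P y.
Proof.
move=> Px H y /connectP [s ps ->]; elim: s x Px ps => [|z s IH] x Px //=.
by case/andP=> gxz; apply: IH (H _ _ Px gxz).
Qed.

Lemma card_ind (T : finType) (P : {set T} -> Prop) :
  (forall S : {set T}, (forall C : {set T}, #|C| < #|S| -> P C) -> P S) ->
  forall S, P S.
Proof.
move=> H S; elim: {S}#|S|.+1 {-2}S (ltnSn #|S|) => // n IHn S cS.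
by apply: H => C cC; apply: IHn (leq_trans cC _).
Qed.

Section Components.
Variables (T : finType) (f : rel T).
Hypothesis fsym : symmetric f.
Implicit Types X S : {set T}.

Definition connected X := {in X &, forall y z, connect (induced f X) y z}.

Lemma induced_sym X : symmetric (induced f X).
Proof. by move=> x y; rewrite /induced /= fsym [(x \in X) && _]andbC. Qed.

Lemma comp_sub X x y : y \in comp f X x -> y \in X.
Proof. by rewrite inE => /andP[]. Qed.

Lemma comp_subset X x : comp f X x \subset X.
Proof. by apply/subsetP => y /comp_sub. Qed.

Lemma comp_refl X x : x \in X -> x \in comp f X x.
Proof. by move=> xX; rewrite inE xX connect0. Qed.

Lemma eq_comp X x y : y \in comp f X x -> comp f X y = comp f X x.
Proof.
rewrite inE => /andP[_ cxy]; apply/setP => z; rewrite !inE.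
case: (z \in X) => //=; apply/idP/idP; first exact: connect_trans.
by apply: connect_trans; rewrite (sym_connect_sym (induced_sym X)).
Qed.

Lemma comp_edge X x y z :
  y \in comp f X x -> z \in X -> f y z -> z \in comp f X x.
Proof.
rewrite !inE => /andP[yX cxy] zX fyz; rewrite zX.
by apply: connect_trans cxy (connect1 _); rewrite /induced /= fyz yX zX.
Qed.

Lemma comp_connected X x : connected (comp f X x).
Proof.
move=> y z yC zC.
have reach w : connect (induced f X) y w ->
    w \in comp f X x /\ connect (induced f (comp f X x)) y w.
  move: w; apply: connect_ind => [|a b [aC cya] /and3P[fab _ bX]].
    by rewrite yC connect0.
  have bC := comp_edge aC bX fab.
  by split=> //; apply: connect_trans cya (connect1 _); rewrite /induced /= fab aC.
suff /reach[] : connect (induced f X) y z by [].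
move: yC zC; rewrite !inE => /andP[_ cxy] /andP[_].
by apply: connect_trans; rewrite (sym_connect_sym (induced_sym X)).
Qed.

Lemma connected_compE X x : connected X -> x \in X -> comp f X x = X.
Proof.
move=> cX xX; apply/setP => y; rewrite inE.
by case yX: (y \in X) => //=; apply: cX.
Qed.

Lemma card_comp_lt S r u : r \in S -> #|comp f (S :\ r) u| < #|S|.
Proof.
by move=> rS; rewrite (cardsD1 r S) rS add1n ltnS subset_leq_card ?comp_subset.
Qed.

End Components.

Section SearchTreeBasics.
Variables (T : finType) (f : rel T).
Implicit Types (S C : {set T}) (p q : T -> option T).

Lemma st_root_in S r p : search_tree f S r p -> r \in S.
Proof. by case. Qed.

Lemma st_rootN S r p : search_tree f S r p -> p r = None.
Proof. by case. Qed.

Lemma st_subtree S r p u : search_tree f S r p -> u \in S :\ r ->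
  exists rc q, search_tree f (comp f (S :\ r) u) rc q /\
    {in comp f (S :\ r) u, forall v, p v = if v == rc then Some r else q v}.
Proof. by case=> {}S {}r {}p _ _ /[apply]. Qed.

Lemma eq_search_tree S r p p' :
  {in S, p =1 p'} -> search_tree f S r p -> search_tree f S r p'.
Proof.
move=> E st; case: st E => {}S {}r {}p rS pr sub E; constructor=> [//||u /sub[rc [q [st ag]]]].
  by rewrite -E.
by exists rc, q; split=> // v vC; rewrite -E ?ag //; move/comp_sub: vC => /setD1P[].
Qed.

Definition rooted_chain p S r v k :=
  kth_anc p k v = Some r /\
  forall j, j <= k -> exists2 w, kth_anc p j v = Some w & w \in S.

Section Graft.
Variables (p q : T -> option T) (r rc : T) (C : {set T}).
Hypothesis graft : {in C, forall w, p w = if w == rc then Some r else q w}.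
Hypothesis qrc : q rc = None.

Lemma graft_chain v k : rooted_chain q C rc v k ->
  (forall j, j <= k -> kth_anc p j v = kth_anc q j v) /\
  kth_anc p k.+1 v = Some r.
Proof.
move=> [Hk Hj]; have E j : j <= k -> kth_anc p j v = kth_anc q j v.
  elim: j => // j IH jk; rewrite !kth_ancS (IH (ltnW jk)).
  have [w Hw wC] := Hj j (ltnW jk); rewrite Hw /= graft //.
  by case: eqP => // wrc; rewrite wrc in Hw; move: jk; rewrite (kth_anc_root_uniq qrc Hw Hk) ltnn.
split; first exact: E.
have [w Hw wC] := Hj k (leqnn k).
by rewrite kth_ancS E // Hw /= graft //; move: Hw; rewrite Hk => -[->]; rewrite eqxx.
Qed.

End Graft.

Lemma st_rooted_chain S r p v : search_tree f S r p -> v \in S ->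
  exists2 k, k < #|S| & rooted_chain p S r v k.
Proof.
elim/card_ind: S r p v => S IH r p v st vS.
have rS := st_root_in st; case: (eqVneq v r) => [->|vr].
  exists 0; first by apply/card_gt0P; exists r.
  by split=> // -[|//] _; exists r.
have vS' : v \in S :\ r by rewrite in_setD1 vr.
have [rc [q [stq graft]]] := st_subtree st vS'.
have cC := card_comp_lt f v rS.
have [k kC chain] := IH _ cC _ _ v stq (comp_refl f vS').
have [E Hr] := graft_chain graft (st_rootN stq) chain.
exists k.+1; first exact: leq_ltn_trans kC cC.
split=> // j; rewrite leq_eqVlt ltnS => /orP[/eqP->|jk]; first by exists r.
have [w Hw /comp_sub/setD1P[_ wS]] := chain.2 j jk.
by exists w; rewrite ?E.
Qed.

Lemma st_anc_root S r p v : search_tree f S r p -> v \in S -> anc p r v.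
Proof. by move=> st /(st_rooted_chain st)[k _ [Hk _]]; exists k. Qed.

Lemma st_anc_in S r p a v : search_tree f S r p -> v \in S -> anc p a v -> a \in S.
Proof.
move=> st /(st_rooted_chain st)[k _ [Hk Hj]] [j Ha].
case: (leqP j k) => [/Hj[w]|kj]; first by rewrite Ha => -[->].
by rewrite (kth_anc_past_root (st_rootN st) Hk kj) in Ha.
Qed.

Lemma st_parent_in S r p y z : search_tree f S r p -> y \in S -> p y = Some z -> z \in S.
Proof. by move=> st yS pyz; apply: st_anc_in st yS _; exists 1. Qed.

Lemma st_parent_neq S r p y :
  search_tree f S r p -> y \in S -> p y != Some y.
Proof.
move=> st /(st_rooted_chain st)[k _ [Hk _]]; apply/eqP => pyy.
have fix_y j : kth_anc p j y = Some y by elim: j => //= j ->.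
by move: (st_rootN st); rewrite -[r]/(odflt r (Some r)) -Hk fix_y pyy.
Qed.

Section GraftAnc.
Variables (p q : T -> option T) (r rc : T) (C : {set T}).
Hypothesis stq : search_tree f C rc q.
Hypothesis graft : {in C, forall w, p w = if w == rc then Some r else q w}.

Lemma graft_anc a v : v \in C -> anc q a v -> anc p a v.
Proof.
move=> /(st_rooted_chain stq)[k _ chain] [j Hj].
have [E _] := graft_chain graft (st_rootN stq) chain.
case: (leqP j k) => jk; first by exists j; rewrite E.
by rewrite (kth_anc_past_root (st_rootN stq) chain.1 jk) in Hj.
Qed.

Lemma graft_anc_inv a v : p r = None -> a != r -> v \in C -> anc p a v -> anc q a v.
Proof.
move=> pr ar /(st_rooted_chain stq)[k _ chain] [j Hj].
have [E Hr] := graft_chain graft (st_rootN stq) chain.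
case: (ltngtP j k.+1) => jk; first by exists j; rewrite -E.
  by rewrite (kth_anc_past_root pr Hr jk) in Hj.
by move: Hj; rewrite jk Hr => -[/eqP]; rewrite eq_sym (negbTE ar).
Qed.

End GraftAnc.

Lemma st_edge_anc S r p y z : search_tree f S r p ->
  y \in S -> z \in S -> f y z -> anc p y z \/ anc p z y.
Proof.
elim/card_ind: S r p y z => S IH r p y z st yS zS fyz.
case: (eqVneq y r) => [->|yr]; first by left; apply: st_anc_root st zS.
case: (eqVneq z r) => [->|zr]; first by right; apply: st_anc_root st yS.
have yS' : y \in S :\ r by rewrite in_setD1 yr.
have [rc [q [stq graft]]] := st_subtree st yS'.
have yC := comp_refl f yS'.
have zC := comp_edge yC (_ : z \in S :\ r) fyz; rewrite in_setD1 zr zS in zC.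
have [H|H] := IH _ (card_comp_lt f y (st_root_in st)) _ _ _ _ stq yC (zC isT) fyz.
  by left; exact: (graft_anc stq graft (zC isT) H).
by right; exact: (graft_anc stq graft yC H).
Qed.

End SearchTreeBasics.

Lemma eqSome (T : eqType) (x y : T) : (Some x == Some y) = (x == y).
Proof. by rewrite (inj_eq Some_inj). Qed.

Section Insertion.
Variable V : finType.
Implicit Types (A S : {set V}) (b : bool) (p : V -> option V)
  (q : option V -> option (option V)).

Definition optset b A : {set option V} :=
  [set y | if y is Some w then w \in A else b].

Definition lift_tree p y : option (option V) :=
  if y is Some w then omap Some (p w) else None.

Definition insert_above p a y : option (option V) :=
  match y with
  | None => omap Some (p a)
  | Some w => if w == a then Some None else omap Some (p w)
  end.

Definition insert_leaf p v y : option (option V) :=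
  if y is Some w then omap Some (p w) else Some (Some v).

Definition remove_x q w : option V :=
  match q (Some w) with
  | Some None => obind id (q None)
  | Some (Some u) => Some u
  | None => None
  end.

Lemma in_optsetS b A w : (Some w \in optset b A) = (w \in A).
Proof. by rewrite inE. Qed.

Lemma in_optsetN b A : (None \in optset b A) = b.
Proof. by rewrite inE. Qed.

Lemma optsetD1S b A r : optset b A :\ Some r = optset b (A :\ r).
Proof. by apply/setP => -[w|]; rewrite !inE. Qed.

Lemma optsetD1N A : optset true A :\ None = optset false A.
Proof. by apply/setP => -[w|]; rewrite !inE. Qed.

Lemma optsetT : optset true [set: V] = [set: option V].
Proof. by apply/setP => -[w|]; rewrite !inE. Qed.

Lemma remove_xE q w : q (Some w) != Some None -> q (Some w) = omap Some (remove_x q w).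
Proof. by rewrite /remove_x; case: (q (Some w)) => [[x|]|]. Qed.

Lemma eq_remove_x q1 q2 w : q1 (Some w) = q2 (Some w) -> q1 (Some w) != Some None ->
  remove_x q1 w = remove_x q2 w.
Proof. by rewrite /remove_x => ->; case: (q2 (Some w)) => [[x|]|]. Qed.

Lemma remove_x_ext q1 q2 : q1 =1 q2 -> remove_x q1 =1 remove_x q2.
Proof. by move=> E w; rewrite /remove_x !E. Qed.

Lemma remove_x_above p a : remove_x (insert_above p a) =1 p.
Proof. by move=> w; rewrite /remove_x /=; case: eqP => [->|_]; case: (p _). Qed.

Lemma remove_x_leaf p v : remove_x (insert_leaf p v) =1 p.
Proof. by move=> w; rewrite /remove_x /=; case: (p w). Qed.

Lemma remove_x_aboveK q a : q None != Some None ->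
  (forall w, (q (Some w) == Some None) = (w == a)) -> q =1 insert_above (remove_x q) a.
Proof.
move=> qN child [w|] /=.
  by have := child w; case: (eqVneq w a) => [-> /eqP //|_ /negbT]; apply: remove_xE.
have /eqP qa : q (Some a) == Some None by rewrite child.
by rewrite /remove_x qa; case: (q None) qN => [[u|]|].
Qed.

Lemma remove_x_leafK q v : q None = Some (Some v) ->
  (forall w, q (Some w) != Some None) -> q =1 insert_leaf (remove_x q) v.
Proof. by move=> qN child [w|] //=; apply: remove_xE. Qed.

End Insertion.

Section Contraction.
Variables (V : finType) (f : rel (option V)).
Implicit Types (Y : {set option V}) (q : option V -> option (option V)).

Lemma graft_x_child Y rc' q' q r w : search_tree f Y rc' q' ->
  {in Y, forall y, q y = if y == rc' then Some (Some r) else q' y} -> Some w \in Y ->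
  (q (Some w) == Some None) = (q' (Some w) == Some None).
Proof.
move=> st graft wY; rewrite graft //.
by case: (eqVneq (Some w) rc') st => // <- /st_rootN ->.
Qed.

Lemma optset_false_no_child S r' q w : search_tree f (optset false S) r' q ->
  w \in S -> q (Some w) != Some None.
Proof.
move=> st wS; apply/eqP => /(st_parent_in st).
by rewrite !in_optsetN in_optsetS => /(_ wS).
Qed.

Lemma remove_x_graft Y rc' q' q r rc w : search_tree f Y rc' q' ->
  {in Y, forall y, q y = if y == rc' then Some (Some r) else q' y} ->
  rc' = Some rc \/
    rc' = None /\ (forall w, Some w \in Y -> (q' (Some w) == Some None) = (w == rc)) ->
  Some w \in Y -> remove_x q w = if w == rc then Some r else remove_x q' w.
Proof.
move=> st graft [rcE|[rcN child]] wY; subst rc'; have qw := graft _ wY.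
  rewrite eqSome in qw.
  case: (eqVneq w rc) qw => [-> qrc|_ qw]; first by rewrite /remove_x qrc.
  rewrite /remove_x qw; case E: (q' (Some w)) => [[z|]|] //.
  by rewrite graft ?(st_parent_in st wY E).
have := child w wY; rewrite /= in qw.
case: (eqVneq w rc) qw => [-> qw /eqP qrc|_ qw /negbT nchild].
  by rewrite /remove_x qw qrc graft ?(st_root_in st).
by apply: eq_remove_x; rewrite qw.
Qed.

End Contraction.

Section ExtendedGraph.
Variables (V : finType) (e : rel V) (K : {set V}).
Hypothesis sym_e : symmetric e.
Hypothesis Kclique : {in K &, forall u v, u != v -> e u v}.
Local Notation GK := (addvx e K).
Implicit Types (A S : {set V}) (b : bool) (p : V -> option V)
  (q : option V -> option (option V)).

Lemma addvx_sym : symmetric GK.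
Proof. by move=> [x|] [y|] //=; rewrite sym_e. Qed.

Lemma connect_optset b A u w : connect (induced e A) u w ->
  connect (induced GK (optset b A)) (Some u) (Some w).
Proof.
move: w; apply: connect_ind => // y z cuy /and3P[eyz yA zA].
by apply: connect_trans cuy (connect1 _); rewrite /induced /= !in_optsetS eyz yA zA.
Qed.

Lemma comp_clique A x k1 k2 : k1 \in K -> k2 \in K ->
  k1 \in comp e A x -> k2 \in A -> k2 \in comp e A x.
Proof.
move=> k1K k2K k1C k2A; case: (eqVneq k1 k2) => [<- //|ne].
exact: comp_edge k1C k2A (Kclique k1K k2K ne).
Qed.

Lemma comp_optset_Some b A u : u \in A ->
  comp GK (optset b A) (Some u) =
  optset (b && (K :&: comp e A u != set0)) (comp e A u).
Proof.
move=> uA; apply/setP => y; apply/idP/idP.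
- rewrite inE => /andP[_]; move: y; apply: connect_ind.
    by rewrite in_optsetS comp_refl.
  move=> [y|] [z|] //; rewrite /induced /= ?in_optsetS ?in_optsetN.
  + by move=> yC /and3P[eyz _ zA]; apply: comp_edge yC zA eyz.
  + by move=> yC /and3P[yK _ ->]; apply/set0Pn; exists y; rewrite inE yK.
  + move=> /andP[_ /set0Pn[k /setIP[kK kC]]] /and3P[zK _ zA].
    exact: comp_clique kK zK kC zA.
- case: y => [z|]; rewrite ?in_optsetS ?in_optsetN => H.
    rewrite inE in_optsetS (comp_sub H) /=; apply: connect_optset.
    by move: H; rewrite inE => /andP[].
  case/andP: H => b_ /set0Pn[k /setIP[kK kC]]; rewrite inE in_optsetN b_ /=.
  apply: connect_trans (_ : connect _ _ (Some k)) _.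
    by apply: connect_optset; move: kC; rewrite inE => /andP[].
  by apply: connect1; rewrite /induced /= in_optsetS in_optsetN kK (comp_sub kC).
Qed.

Lemma comp_optset_None A k : k \in K -> k \in A ->
  comp GK (optset true A) None = comp GK (optset true A) (Some k).
Proof.
move=> kK kA; apply: (eq_comp addvx_sym).
by apply: (comp_edge (y := Some k)); rewrite ?comp_refl ?in_optsetS ?in_optsetN.
Qed.

Lemma comp_optset_None0 A : K :&: A = set0 ->
  comp GK (optset true A) None = [set None].
Proof.
move=> noK.
have reach y : connect (induced GK (optset true A)) None y -> y = None.
  move: y; apply: connect_ind => // y [z|] // ->.
  rewrite /induced /= in_optsetN in_optsetS => /and3P[zK _ zA].
  by move/setP/(_ z): noK; rewrite !inE zK zA.
apply/setP => y; rewrite !inE; apply/andP/eqP => [[_ /reach //]|->].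
by rewrite connect0.
Qed.

Lemma lift_search_tree S r p : search_tree e S r p ->
  search_tree GK (optset false S) (Some r) (lift_tree p).
Proof.
elim/card_ind: S r p => S IH r p st; have rS := st_root_in st.
constructor; rewrite ?in_optsetS //= ?(st_rootN st) //.
move=> [u|]; rewrite optsetD1S ?in_optsetN // in_optsetS => uS.
have [rc [q [stq graft]]] := st_subtree st uS.
exists (Some rc), (lift_tree q); rewrite comp_optset_Some //; split.
  exact: IH _ (card_comp_lt e u rS) _ _ stq.
move=> [w|]; rewrite ?in_optsetN // in_optsetS => wC /=.
by rewrite graft // eqSome; case: (w == rc).
Qed.

Lemma lift_component S r p q u : search_tree e S r p -> u \in S :\ r ->
  K :&: comp e (S :\ r) u = set0 ->
  {in comp e (S :\ r) u, forall w, q (Some w) = omap Some (p w)} ->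
  exists rc' q', search_tree GK (comp GK (optset true (S :\ r)) (Some u)) rc' q' /\
    {in comp GK (optset true (S :\ r)) (Some u),
      forall y, q y = if y == rc' then Some (Some r) else q' y}.
Proof.
move=> st uS noK qp; rewrite comp_optset_Some // noK eqxx /=.
have [rc [q2 [st2 graft]]] := st_subtree st uS.
exists (Some rc), (lift_tree q2); split; first exact: lift_search_tree st2.
move=> [w|]; rewrite ?in_optsetN // in_optsetS => wC /=.
by rewrite qp // graft // eqSome; case: (w == rc).
Qed.

(* [K :\ r] is a clique, so it lies inside the component of [v]: this is the only
   component of [S :\ r] that [x] joins. *)
Lemma search_tree_graft_x S r p q v rc' q' :
  search_tree e S r p -> v \in K -> v \in S :\ r -> q (Some r) = None ->
  search_tree GK (optset true (comp e (S :\ r) v)) rc' q' ->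
  {in optset true (comp e (S :\ r) v),
    forall y, q y = if y == rc' then Some (Some r) else q' y} ->
  {in S :\ r, forall w, w \notin comp e (S :\ r) v -> q (Some w) = omap Some (p w)} ->
  search_tree GK (optset true S) (Some r) q.
Proof.
move=> st vK vS qr stv graftv outside.
have rS := st_root_in st.
have Kv : K :&: comp e (S :\ r) v != set0.
  by apply/set0Pn; exists v; rewrite inE vK comp_refl.
constructor; rewrite ?in_optsetS //.
move=> [u|] Hu; last first.
  by exists rc', q'; rewrite optsetD1S (comp_optset_None vK vS) comp_optset_Some // Kv.
move: Hu; rewrite optsetD1S in_optsetS => uS.
have [/eqP noK|/set0Pn[k /setIP[kK kC]]] := boolP (K :&: comp e (S :\ r) u == set0).
  have := lift_component st uS noK; apply=> w wC; apply: outside (comp_sub wC) _.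
  apply/negP => wCv; move/setP/(_ v): noK.
  by rewrite -(eq_comp sym_e wC) (eq_comp sym_e wCv) in_setI vK comp_refl // inE.
exists rc', q'; rewrite comp_optset_Some //.
by rewrite -(eq_comp sym_e (comp_clique kK vK kC vS)) Kv.
Qed.

Lemma insert_above_root_search_tree S r p : search_tree e S r p -> connected e S ->
  search_tree GK (optset true S) None (insert_above p r).
Proof.
move=> st cnS; constructor; rewrite ?in_optsetN //= ?(st_rootN st) //.
move=> [u|]; rewrite optsetD1N ?in_optsetN // in_optsetS => uS.
exists (Some r), (lift_tree p).
rewrite comp_optset_Some //= (connected_compE cnS uS); split; first exact: lift_search_tree st.
by move=> [w|]; rewrite ?in_optsetN // in_optsetS => wS /=; rewrite eqSome.
Qed.

Lemma insert_above_search_tree S r p a v :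
  search_tree e S r p -> connected e S -> v \in K -> v \in S -> anc p a v ->
  search_tree GK (optset true S) (if a == r then None else Some r) (insert_above p a).
Proof.
elim/card_ind: S r p => S IH r p st cnS vK vS av.
have [->|ar] := eqVneq a r; first exact: insert_above_root_search_tree.
have pr := st_rootN st; have rS := st_root_in st.
have vr : v != r by apply: contra_neq ar => vr; rewrite vr in av; apply: anc_root av.
have vS' : v \in S :\ r by rewrite in_setD1 vr.
have [rc [q [stq graft]]] := st_subtree st vS'.
have aq : anc q a v := graft_anc_inv stq graft pr ar (comp_refl e vS') av.
have aC : a \in comp e (S :\ r) v := st_anc_in stq (comp_refl e vS') aq.
have stv := IH _ (card_comp_lt e v rS) _ _ stq (@comp_connected _ _ sym_e (S :\ r) v) vK
  (comp_refl e vS') aq.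
apply: search_tree_graft_x st vK vS' _ stv _ _.
- by rewrite /= eq_sym (negbTE ar) pr.
- move=> [w|]; rewrite ?in_optsetS => // wC /=; rewrite graft //.
    have [->|arc] := eqVneq a rc; first by case: (w == rc).
    by rewrite eqSome; case: (eqVneq w rc) => [->|//]; rewrite eq_sym (negbTE arc).
  by have [->|arc] := eqVneq a rc; rewrite ?eqxx // (negbTE arc).
- move=> w _ wC /=; suff /negbTE-> : w != a by [].
  by apply: contraNneq wC => ->.
Qed.

Lemma insert_leaf_root_search_tree S r p : search_tree e S r p ->
  K :&: (S :\ r) = set0 -> search_tree GK (optset true S) (Some r) (insert_leaf p r).
Proof.
move=> st noK; constructor; rewrite ?in_optsetS ?(st_root_in st) //= ?(st_rootN st) //.
move=> [u|] Hu.
  move: Hu; rewrite optsetD1S in_optsetS => uS; apply: lift_component st uS _ _ => //.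
  by apply/eqP; rewrite -subset0 -noK setIS ?comp_subset.
rewrite optsetD1S comp_optset_None0 //; exists None, (fun _ => None); split.
  by constructor=> [||u]; rewrite ?setDv ?inE.
by move=> y /set1P ->.
Qed.

Lemma insert_leaf_search_tree S r p v :
  search_tree e S r p -> v \in K -> v \in S ->
  {in K :&: S, forall k, anc p v k -> k = v} ->
  search_tree GK (optset true S) (Some r) (insert_leaf p v).
Proof.
elim/card_ind: S r p => S IH r p st vK vS vmax.
have pr := st_rootN st; have rS := st_root_in st.
have [vr|vr] := eqVneq v r.
  rewrite vr in vK vmax *; apply: insert_leaf_root_search_tree (st) _.
  apply/setP => k; rewrite !inE; apply/negbTE/and3P => -[kK kr kS].
  by move: kr; rewrite (vmax k _ (st_anc_root st kS)) ?eqxx // inE kK.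
have vS' : v \in S :\ r by rewrite in_setD1 vr.
have [rc [q [stq graft]]] := st_subtree st vS'.
have vmaxq : {in K :&: comp e (S :\ r) v, forall k, anc q v k -> k = v}.
  move=> k /setIP[kK kC] vk; apply: vmax (graft_anc stq graft kC vk).
  by rewrite inE kK; case/comp_sub/setD1P: kC.
have stv := IH _ (card_comp_lt e v rS) _ _ stq vK (comp_refl e vS') vmaxq.
apply: search_tree_graft_x st vK vS' _ stv _ _ => //=; first by rewrite pr.
by move=> [w|]; rewrite ?in_optsetS => // wC /=; rewrite graft // eqSome; case: (w == rc).
Qed.

Lemma optset_connected S : connected GK (optset true S) -> connected e S.
Proof.
move=> cn u w uS wS.
have := cn (Some u) (Some w); rewrite !in_optsetS => /(_ uS wS).
suff reach y : connect (induced GK (optset true S)) (Some u) y ->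
    match y return Prop with
    | Some z => connect (induced e S) u z
    | None => {in K :&: S, forall k, connect (induced e S) u k}
    end by apply: reach.
move: y; apply: connect_ind => [|[y|] [z|] //]; rewrite /induced /= ?in_optsetS ?in_optsetN.
- exact: connect0.
- move=> cy /and3P[eyz yS zS]; apply: connect_trans cy (connect1 _).
  by rewrite /induced /= eyz yS zS.
- move=> cy /and3P[yK yS _] k /setIP[kK kS]; case: (eqVneq y k) => [<- //|ne].
  by apply: connect_trans cy (connect1 _); rewrite /induced /= Kclique // yS kS.
- by move=> H /and3P[zK _ zS]; apply: H; rewrite inE zK zS.
Qed.

Lemma optset_root_in_K S r : connected GK (optset true S) -> r \in S ->
  K :&: (S :\ r) = set0 -> r \in K.
Proof.
move=> cn rS noK; have := cn None (Some r); rewrite in_optsetN in_optsetS => /(_ isT rS).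
suff reach y : connect (induced GK (optset true S)) None y ->
  if y is Some _ then r \in K else true by apply: reach.
move: y; apply: connect_ind => // -[y|] [z|] //; rewrite /induced /= ?in_optsetS ?in_optsetN.
move=> _ /and3P[zK _ zS]; case: (eqVneq z r) => [<- //|ne].
by move/setP/(_ z): noK; rewrite !inE zK ne zS.
Qed.

Lemma unlift_search_tree S r' q : search_tree GK (optset false S) r' q ->
  exists2 r, r' = Some r & search_tree e S r (remove_x q).
Proof.
elim/card_ind: S r' q => S IH r' q st.
have [r rE] : exists r, r' = Some r.
  by case: r' st => [r|] st; [exists r | have := st_root_in st; rewrite in_optsetN].
subst r'; exists r => //; have := st_root_in st; rewrite in_optsetS => rS.
constructor=> //; first by rewrite /remove_x (st_rootN st).
move=> u uS; have Hu : Some u \in optset false S :\ Some r by rewrite optsetD1S in_optsetS.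
have [rc' [q' [st' graft]]] := st_subtree st Hu.
rewrite optsetD1S comp_optset_Some //= in st' graft.
have [rc rcE strc] := IH _ (card_comp_lt e u rS) _ _ st'.
exists rc, (remove_x q'); split=> // w wC.
by apply: remove_x_graft st' graft _ _; [left | rewrite in_optsetS].
Qed.

(* [x] has the single child [a], an ancestor of a vertex of [K]: the shape of
   [T(i,x,v)] for [i <= d_{T,v}]. *)
Definition x_above q S (r' : option V) (r : V) := exists a, [/\
  {in S, forall w, (q (Some w) == Some None) = (w == a)},
  exists2 k, k \in K :&: S & anc (remove_x q) a k &
  r' = if a == r then None else Some r].

(* [x] is a leaf below a vertex [v] of [K] without proper descendants in [K]: the
   shape of [T(d_{T,v}+1,x,v)]. *)
Definition x_leaf q S (r' : option V) (r : V) := r' = Some r /\ exists v, [/\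
  v \in K :&: S, {in K :&: S, forall k, anc (remove_x q) v k -> k = v},
  q None = Some (Some v) & {in S, forall w, q (Some w) != Some None}].

Definition x_removable q S (r' : option V) := exists r,
  search_tree e S r (remove_x q) /\ (x_above q S r' r \/ x_leaf q S r' r).

Lemma remove_x_root S q : search_tree GK (optset true S) None q ->
  connected GK (optset true S) -> K :&: S != set0 -> x_removable q S None.
Proof.
move=> st cn /set0Pn[k0 /setIP[k0K k0S]].
have Hk0 : Some k0 \in optset true S :\ None by rewrite optsetD1N in_optsetS.
have [rc' [q' [st' graft]]] := st_subtree st Hk0.
rewrite optsetD1N comp_optset_Some //= (connected_compE (optset_connected cn) k0S) in st' graft.
have [rc rcE strc] := unlift_search_tree st'; subst rc'.
have child : {in S, forall w, (q (Some w) == Some None) = (w == rc)}.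
  move=> w wS; rewrite graft ?in_optsetS // eqSome.
  by case: (eqVneq w rc) => // _; apply/negbTE; apply: optset_false_no_child st' wS.
have Erem : {in S, remove_x q' =1 remove_x q}.
  move=> w wS; case: (eqVneq w rc) (child w wS) => [-> /eqP qrc|wrc /negbT nchild].
    by rewrite /remove_x qrc (st_rootN st) (st_rootN st').
  symmetry; apply: eq_remove_x nchild.
  by rewrite graft ?in_optsetS // eqSome (negbTE wrc).
have stq := eq_search_tree Erem strc.
exists rc; split=> //; left; exists rc; split=> //; last by rewrite eqxx.
by exists k0; [rewrite inE k0K | apply: st_anc_root stq k0S].
Qed.

Section RemovalStep.
Variables (S : {set V}) (r : V) (q : option V -> option (option V)).
Hypothesis st : search_tree GK (optset true S) (Some r) q.
Hypothesis IH : forall C : {set V}, #|C| < #|S| -> forall r' q',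
  search_tree GK (optset true C) r' q' -> connected GK (optset true C) ->
  K :&: C != set0 -> x_removable q' C r'.

Lemma x_child_noK w : w \in S :\ r -> K :&: comp e (S :\ r) w = set0 ->
  q (Some w) != Some None.
Proof.
move=> wS noK; have Hw : Some w \in optset true S :\ Some r by rewrite optsetD1S in_optsetS.
have [rc' [q' [st' graft]]] := st_subtree st Hw.
rewrite optsetD1S comp_optset_Some // noK eqxx /= in st' graft.
have wY : Some w \in optset false (comp e (S :\ r) w) by rewrite in_optsetS comp_refl.
by rewrite (graft_x_child st' graft wY) (optset_false_no_child st') ?comp_refl.
Qed.

Lemma remove_x_component_noK u : u \in S :\ r -> K :&: comp e (S :\ r) u = set0 ->
  exists rc q', search_tree e (comp e (S :\ r) u) rc (remove_x q') /\
    {in comp e (S :\ r) u, forall w, remove_x q w = if w == rc then Some r else remove_x q' w}.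
Proof.
move=> uS noK; have Hu : Some u \in optset true S :\ Some r by rewrite optsetD1S in_optsetS.
have [rc' [q' [st' graft]]] := st_subtree st Hu.
rewrite optsetD1S comp_optset_Some // noK eqxx /= in st' graft.
have [rc rcE strc] := unlift_search_tree st'.
exists rc, q'; split=> // w wC.
by apply: remove_x_graft st' graft _ _; [left | rewrite in_optsetS].
Qed.

Lemma remove_x_component_K u : u \in S :\ r -> K :&: comp e (S :\ r) u != set0 ->
  exists rc rc' q', [/\ search_tree e (comp e (S :\ r) u) rc (remove_x q'),
    search_tree GK (optset true (comp e (S :\ r) u)) rc' q',
    {in comp e (S :\ r) u, forall w, remove_x q w = if w == rc then Some r else remove_x q' w},
    {in optset true (comp e (S :\ r) u),
      forall y, q y = if y == rc' then Some (Some r) else q' y} &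
    x_above q' (comp e (S :\ r) u) rc' rc \/ x_leaf q' (comp e (S :\ r) u) rc' rc].
Proof.
move=> uS KC; have Hu : Some u \in optset true S :\ Some r by rewrite optsetD1S in_optsetS.
have [rc' [q' [st' graft]]] := st_subtree st Hu.
have cn' := @comp_connected _ _ addvx_sym (optset true S :\ Some r) (Some u).
rewrite optsetD1S comp_optset_Some // KC /= in st' graft cn'.
have rS : r \in S by rewrite -(in_optsetS true) (st_root_in st).
have [rc [strc shape]] := IH (card_comp_lt e u rS) st' cn' KC.
exists rc, rc', q'; split=> // w wC.
apply: remove_x_graft st' graft _ _; last by rewrite in_optsetS.
case: shape => [[a [child _ ->]]|[-> _]]; last by left.
case: eqP => [<-|_]; last by left.
by right; split=> // w' /[!in_optsetS] /child.
Qed.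

Lemma remove_x_search_tree : search_tree e S r (remove_x q).
Proof.
have rS : r \in S by rewrite -(in_optsetS true) (st_root_in st).
constructor=> //; first by rewrite /remove_x (st_rootN st).
move=> u uS; have [noK|KC] := eqVneq (K :&: comp e (S :\ r) u) set0.
  by have [rc [q' [? ?]]] := remove_x_component_noK uS noK; exists rc, (remove_x q').
by have [rc [_ [q' [? _ ? _ _]]]] := remove_x_component_K uS KC; exists rc, (remove_x q').
Qed.

Lemma x_leaf_at_root : connected GK (optset true S) -> K :&: (S :\ r) = set0 ->
  x_leaf q S (Some r) r.
Proof.
move=> cn noK; have rS : r \in S by rewrite -(in_optsetS true) (st_root_in st).
have NY : None \in optset true S :\ Some r by rewrite optsetD1S in_optsetN.
have [rc' [q' [st' graft]]] := st_subtree st NY.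
rewrite optsetD1S comp_optset_None0 // in st' graft.
have /set1P rc'N := st_root_in st'.
split=> //; exists r; split.
- by rewrite inE (optset_root_in_K cn rS noK).
- move=> k /setIP[kK kS] _; case: (eqVneq k r) => // kr.
  by move/setP/(_ k): noK; rewrite !inE kK kr kS.
- by rewrite graft ?inE // rc'N.
- move=> w wS; case: (eqVneq w r) => [->|wr]; first by rewrite (st_rootN st).
  apply: x_child_noK; first by rewrite in_setD1 wr.
  by apply/eqP; rewrite -subset0 -noK setIS ?comp_subset.
Qed.

Lemma x_child_in_K_component k w : k \in K -> k \in S :\ r -> w \in S ->
  q (Some w) == Some None -> w \in comp e (S :\ r) k.
Proof.
move=> kK kS wS; apply: contraTT => wC; case: (eqVneq w r) => [->|wr].
  by rewrite (st_rootN st).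
have wS' : w \in S :\ r by rewrite in_setD1 wr wS.
apply: x_child_noK (wS') _; apply/eqP; rewrite -subset0; apply/subsetP => k' /setIP[k'K k'w].
have /(eq_comp sym_e) Ewk := comp_clique k'K kK k'w kS.
by move: wC; rewrite Ewk comp_refl.
Qed.

Lemma x_above_or_leaf_K k : k \in K -> k \in S :\ r ->
  x_above q S (Some r) r \/ x_leaf q S (Some r) r.
Proof.
move=> kK kS; set C := comp e (S :\ r) k.
have kC : k \in C := comp_refl e kS.
have KC : K :&: C != set0 by apply/set0Pn; exists k; rewrite inE kK.
have [rc [rc' [q' [strc st' graftr graft shape]]]] := remove_x_component_K kS KC.
have CS w : w \in C -> w \in S :\ r by move/comp_sub.
have childC w : w \in C -> (q (Some w) == Some None) = (q' (Some w) == Some None).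
  by move=> wC; apply: graft_x_child st' graft _; rewrite in_optsetS.
have child w : w \in S -> w \notin C -> q (Some w) != Some None.
  by move=> wS; apply: contra; apply: x_child_in_K_component.
have stq : search_tree e S r (remove_x q) := remove_x_search_tree.
have rootq := st_rootN stq.
case: shape => [[a [childa [k' /setIP[k'K k'C] ak'] _]]|[rc'E [v [/setIP[vK vC] vmax qN nochild]]]].
  have aC : a \in C := st_anc_in strc k'C ak'.
  have /CS/setD1P[ar _] := aC.
  left; exists a; split; last by rewrite (negbTE ar).
    move=> w wS; case: (boolP (w \in C)) => wC; first by rewrite childC // childa.
    have wa : w != a by apply: contraNneq wC => ->.
    by rewrite (negbTE (child w wS wC)) (negbTE wa).
  exists k'; last exact: (graft_anc strc graftr k'C ak').
  by rewrite inE k'K; case/CS/setD1P: k'C => _ ->.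
have /CS/setD1P[vr vS] := vC.
right; split=> //; exists v; split.
- by rewrite inE vK vS.
- move=> k2 /setIP[k2K k2S] vk2; case: (eqVneq k2 r) => [k2r|k2r].
    by subst k2; move: vr; rewrite (anc_root rootq vk2) eqxx.
  have k2C : k2 \in C by apply: comp_clique vK k2K vC _; rewrite in_setD1 k2r.
  apply: vmax; first by rewrite inE k2K.
  exact: (graft_anc_inv strc graftr rootq vr k2C vk2).
- by rewrite graft ?in_optsetN // rc'E.
- move=> w wS; case: (boolP (w \in C)) => wC; last exact: child.
  by rewrite childC // nochild.
Qed.

End RemovalStep.

Lemma remove_x_removable S r' q :
  search_tree GK (optset true S) r' q -> connected GK (optset true S) ->
  K :&: S != set0 -> x_removable q S r'.
Proof.
elim/card_ind: S r' q => S IH [r|] q st cn KS; last exact: remove_x_root.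
exists r; split; first exact: remove_x_search_tree st IH.
have [noK|/set0Pn[k /setIP[kK kS]]] := eqVneq (K :&: (S :\ r)) set0.
  by right; apply: x_leaf_at_root.
exact: x_above_or_leaf_K st IH k kK kS.
Qed.

Lemma optset_connected_setT : connected e [set: V] -> K != set0 ->
  connected GK (optset true [set: V]).
Proof.
move=> cn /set0Pn[k kK].
have reach y : connect (induced GK (optset true [set: V])) (Some k) y.
  case: y => [w|]; first by apply: connect_optset; apply: cn; rewrite in_setT.
  by apply: connect1; rewrite /induced /= kK !inE.
move=> y z _ _; apply: connect_trans (reach z).
by rewrite (sym_connect_sym (induced_sym addvx_sym _)) reach.
Qed.

End ExtendedGraph.

Section Depth.
Variables (V : finType) (e : rel V) (p : {ffun V -> option V}) (r : V).
Hypothesis st : search_tree e [set: V] r p.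

Lemma iter_parE k w : iter_par p k w = kth_anc p k w.
Proof. by []. Qed.

Lemma depthE k w : kth_anc p k w = Some r -> depth p w = k.
Proof.
move=> Hk; have [k0 k0lt [Hk0 _]] := st_rooted_chain st (in_setT w).
rewrite (kth_anc_root_uniq (st_rootN st) Hk Hk0) /depth; apply/eqP.
rewrite eqn_leq; apply/andP; split.
  apply/bigmax_leqP => j /=; rewrite iter_parE leqNgt; apply: contraNN.
  by move/(kth_anc_past_root (st_rootN st) Hk0) ->.
have k0V : k0 < #|V|.+1 by rewrite ltnS ltnW // -cardsT.
by apply: (leq_bigmax_cond (Ordinal k0V)); rewrite /= iter_parE Hk0.
Qed.

Lemma depth_anc j w v : kth_anc p j w = Some v -> depth p w = depth p v + j.
Proof.
move=> Hj; have [k _ [Hk _]] := st_rooted_chain st (in_setT v).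
by rewrite (depthE Hk); apply: depthE; rewrite kth_ancD Hj.
Qed.

Lemma depth_le_anc a w : anc p a w -> depth p a <= depth p w.
Proof. by move=> [j /depth_anc ->]; rewrite leq_addr. Qed.

Lemma insert_above_eq i v : i <= depth p v ->
  exists2 a, kth_anc p (depth p v - i) v = Some a & insert p i v =1 insert_above p a.
Proof.
move=> iv; have [k _ [Hk chain]] := st_rooted_chain st (in_setT v).
have dv := depthE Hk; rewrite dv in iv *.
have [a Ha _] := chain (k - i) (leq_subr i k).
exists a => // -[w|]; rewrite /insert ffunE dv.
  by rewrite iv /= iter_parE Ha eqSome.
case: i iv Ha => [|i] iv Ha /=.
  by move: Ha; rewrite subn0 Hk => -[<-]; rewrite (st_rootN st).
by rewrite iter_parE -(subnSK iv) kth_ancS Ha.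
Qed.

End Depth.

Lemma insert_leaf_eq (V : finType) (p : {ffun V -> option V}) v :
  insert p (depth p v).+1 v =1 insert_leaf p v.
Proof. by move=> [w|]; rewrite /insert ffunE /= ?ltnn ?subnn. Qed.

Lemma remove_x_insert (V : finType) (e : rel V) r (p : {ffun V -> option V}) i v :
  search_tree e [set: V] r p -> i <= (depth p v).+1 -> remove_x (insert p i v) =1 p.
Proof.
move=> st; rewrite leq_eqVlt ltnS => /orP[/eqP->|iv] w.
  by rewrite (remove_x_ext (insert_leaf_eq p v)) remove_x_leaf.
have [a _ E] := insert_above_eq st iv.
by rewrite (remove_x_ext E) remove_x_above.
Qed.

Section Partition.
Variables (V : finType) (e : rel V) (K : {set V}).
Hypothesis sym_e : symmetric e.
Hypothesis Kclique : {in K &, forall u v, u != v -> e u v}.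
Local Notation GK := (addvx e K).
Implicit Types (T : {ffun V -> option V}) (Tx : {ffun option V -> option (option V)}).

Lemma connected_setT : (forall u v, connect e u v) -> connected e [set: V].
Proof.
move=> conn u v _ _; rewrite (@eq_connect _ _ e) //.
by move=> x y; rewrite /induced /= !in_setT /= andbT.
Qed.

Lemma clique_anc T r u v : search_tree e [set: V] r T -> u \in K -> v \in K ->
  anc T u v \/ anc T v u.
Proof.
move=> st uK vK; case: (eqVneq u v) => [->|uv]; first by left; apply: anc_refl.
exact: st_edge_anc st (in_setT u) (in_setT v) (Kclique uK vK uv).
Qed.

Lemma lam_ge_depth T k : k \in K -> depth T k <= lam K T.
Proof. exact: leq_bigmax_cond. Qed.

Lemma lam_anc_eq T r v k : search_tree e [set: V] r T -> v \in K ->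
  depth T v = lam K T -> k \in K -> anc T v k -> k = v.
Proof.
move=> st vK dv kK [j Hj]; have := lam_ge_depth T kK.
rewrite (depth_anc st Hj) -dv -{2}[depth T v]addn0 leq_add2l leqn0 => /eqP j0.
by move: Hj; rewrite j0 => -[].
Qed.

Lemma lam_anc T r v : search_tree e [set: V] r T -> v \in K ->
  depth T v = lam K T -> {in K, forall k, anc T k v}.
Proof.
move=> st vK dv k kK; case: (clique_anc st kK vK) => // vk.
by rewrite (lam_anc_eq st vK dv kK vk); apply: anc_refl.
Qed.

Lemma lam_maximal T r v : search_tree e [set: V] r T -> v \in K ->
  {in K, forall k, anc T v k -> k = v} -> depth T v = lam K T.
Proof.
move=> st vK vmax; apply/eqP; rewrite eqn_leq lam_ge_depth //=.
apply/bigmax_leqP => k kK; case: (clique_anc st kK vK) => [/(depth_le_anc st) //|].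
by move/(vmax k kK) ->.
Qed.

Lemma Px_exists T : K != set0 -> exists Tx, Px K T Tx.
Proof.
rewrite -card_gt0 => /(eq_bigmax_cond (depth T))[v vK vmax].
by exists (insert T 0 v), v, 0; split.
Qed.

Lemma Px_search_tree T Tx : connected e [set: V] ->
  is_search_tree e T -> Px K T Tx -> is_search_tree GK Tx.
Proof.
move=> cn [r st] [v [i [vK dv il ->]]]; rewrite /is_search_tree -optsetT.
have [iv|vi] := leqP i (depth T v).
  have [a Ha E] := insert_above_eq st iv.
  exists (if a == r then None else Some r).
  apply: eq_search_tree (fun y _ => esym (E y)) _.
  have av : anc T a v by exists (depth T v - i).
  exact: (insert_above_search_tree sym_e Kclique st cn vK (in_setT v) av).
have -> : i = (depth T v).+1 by apply/eqP; rewrite eqn_leq vi dv il.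
exists (Some r); apply: eq_search_tree (fun y _ => esym (insert_leaf_eq T v y)) _.
have vmax : {in K :&: [set: V], forall k, anc T v k -> k = v}.
  by move=> k /setIP[kK _]; apply: lam_anc_eq st vK dv kK.
exact: (insert_leaf_search_tree sym_e Kclique st vK (in_setT v) vmax).
Qed.

Lemma Px_cover Tx : connected e [set: V] -> K != set0 ->
  is_search_tree GK Tx -> exists2 T, is_search_tree e T & Px K T Tx.
Proof.
move=> cn KN [r' st']; rewrite -optsetT in st'.
have Kpos : 0 < #|K| by rewrite card_gt0.
have KS : K :&: [set: V] != set0 by rewrite setIT.
have [r [stq shape]] := remove_x_removable sym_e Kclique st' (optset_connected_setT sym_e cn KN) KS.
pose T := [ffun w => remove_x Tx w]; have TE : T =1 remove_x Tx by move=> w; rewrite ffunE.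
have st : search_tree e [set: V] r T by apply: eq_search_tree stq => w _; rewrite TE.
exists T; first by exists r.
have TxN : Tx None != Some None by apply: st_parent_neq st' _; rewrite in_optsetN.
case: shape => [[a [child [k /setIP[kK _] ak] _]]|[_ [v [/setIP[vK _] vmax TxNv nochild]]]].
  have [v vK /esym dv] := eq_bigmax_cond (depth T) Kpos.
  have [j Hj] : anc T a v.
    by apply: anc_trans (eq_anc (fun w => esym (TE w)) ak) (lam_anc st vK dv kK).
  have av : depth T a <= depth T v by rewrite (depth_anc st Hj) leq_addr.
  exists v, (depth T a); split=> //; first by rewrite /lam -dv leqW.
  have [a' Ha' E] := insert_above_eq st av.
  move: Ha' E; rewrite (depth_anc st Hj) addnC addnK Hj => -[<-] E.
  apply/ffunP => y; rewrite E (remove_x_aboveK TxN (fun w => child w (in_setT w))).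
  by case: y => [w|] /=; rewrite !TE.
have dv : depth T v = lam K T.
  apply: lam_maximal st vK _ => k kK vk.
  by apply: vmax (eq_anc TE vk); rewrite setIT.
exists v, (depth T v).+1; split=> //; first by rewrite dv.
apply/ffunP => y; rewrite insert_leaf_eq (remove_x_leafK TxNv (fun w => nochild w (in_setT w))).
by case: y => [w|] /=; rewrite ?TE.
Qed.

Lemma Px_inj T1 T2 Tx : is_search_tree e T1 -> is_search_tree e T2 ->
  Px K T1 Tx -> Px K T2 Tx -> T1 = T2.
Proof.
move=> [r1 st1] [r2 st2] [v1 [i1 [_ d1 i1l E1]]] [v2 [i2 [_ d2 i2l E2]]].
rewrite -d1 in i1l; rewrite -d2 in i2l; apply/ffunP => w.
by rewrite -(remove_x_insert st1 i1l w) -(remove_x_insert st2 i2l w) -E1 -E2.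
Qed.

End Partition.

Unset Implicit Arguments.
Theorem proposition2p4 (V : finType) (e : rel V) (K : {set V}) :
  symmetric e -> irreflexive e ->
  (forall u v, connect e u v) ->
  K != set0 ->
  (forall u v, u \in K -> v \in K -> u != v -> e u v) ->
  [/\ (* every block is nonempty *)
      (forall T, is_search_tree e T -> exists T', Px K T T'),
      (* every block consists of search trees on G_K *)
      (forall T T', is_search_tree e T -> Px K T T' ->
                    is_search_tree (addvx e K) T'),
      (* the blocks cover V(R(G_K)) *)
      (forall T', is_search_tree (addvx e K) T' ->
                  exists2 T, is_search_tree e T & Px K T T')
    & (* two blocks that meet are equal *)
      (forall T1 T2, is_search_tree e T1 -> is_search_tree e T2 ->
         (exists T', Px K T1 T' /\ Px K T2 T') ->
         forall T', Px K T1 T' <-> Px K T2 T')].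
Proof.
move=> sym_e _ conn KN Kclique; have cn := connected_setT conn.
split=> [T _|T T'|T'|T1 T2 st1 st2 [T' [P1 P2]] T''].
- exact: Px_exists.
- exact: Px_search_tree.
- exact: Px_cover sym_e Kclique T' cn KN.
- by rewrite (Px_inj st1 st2 P1 P2).
Qed.
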